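(* Assume that $n = 2$. Then for any $k \ge 0$ (and any $\ell \in \mathbb{N}$), the following formula holds in $V_2$: \begin{equation*} (r + k,\ell) = \sum_{s=1}^r(-1)^{s-1} \begin{bmatrix} s + k - 1 \\ s -1 \end{bmatrix} \begin{bmatrix} r + k \\ r - s \end{bmatrix}(r - s, \ell + s + k). \end{equation*}
   Context: Let $q$ be an indeterminate, $[n] = \frac{q^n - q^{-n}}{q - q^{-1}}$ for $n \in \mathbb{Z}$, $[m]^! = [1][2]\cdots[m]$, and for $n \in \mathbb{Z}$, $m \in \mathbb{N}$, $\begin{bmatrix} n \\ m\end{bmatrix} = \frac{[n][n-1]\cdots[n-m+1]}{[m]^!}$ for $m \ge 1$, $\begin{bmatrix} n \\ 0\end{bmatrix} = 1$. Fix an integer $r \ge 2$. Let $V_n$ be the vector space over $\mathbb{Q}(q)$ spanned by symbols $a = (a_1, \dots, a_n) \in \mathbb{N}^n$ subject to the following relations: for $1 \le i \le n-1$, if $a_i \ge r$ then $\sum_{0 \le j \le r}(-1)^j\begin{bmatrix} r \\ j\end{bmatrix} a(j) = 0$, where $a(j) = (a_1, \dots, a_{i-1}, a_i - j, a_{i+1} + j, a_{i+2}, \dots, a_n)$ (so $a(0) = a$). In particular for $n = 2$ the relation reads $\sum_{j=0}^r (-1)^j\begin{bmatrix} r \\ j\end{bmatrix}(a_1 - j, a_2 + j) = 0$ whenever $a_1 \ge r$. *)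

From HB Require Import structures.
From mathcomp Require Import all_boot all_order all_algebra.
Set Implicit Arguments. Unset Strict Implicit. Unset Printing Implicit Defensive.
Import Order.TTheory GRing.Theory Num.Theory.
Local Open Scope ring_scope.

Definition Qq : fieldType := {fraction {poly rat}}.
Definition q : Qq := tofrac ('X : {poly rat}).

Definition qint (n : int) : Qq := (q ^ n - q ^ (- n)) / (q - q^-1).

Definition qbinom (n : int) (m : nat) : Qq :=
  (\prod_(i < m) qint (n - i%:Z)) / (\prod_(i < m) qint (i.+1)%:Z).

(* Elements of the free Q(q)-vector space on N^2 are represented by their
   coefficient functions nat * nat -> Qq (finitely supported in practice).
   Basis vector (a1,a2): *)
Definition basis2 (a : nat * nat) : nat * nat -> Qq := fun b => (b == a)%:R.

(* Defining relation of V_2 attached to a = (a1,a2) (to be used when a1 >= r):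
   sum_{0<=j<=r} (-1)^j [r;j] (a1 - j, a2 + j). *)
Definition rel2 (r : nat) (a : nat * nat) : nat * nat -> Qq := fun b =>
  \sum_(j < r.+1) (-1) ^+ j * qbinom r%:Z j * basis2 (a.1 - j, a.2 + j)%N b.

(* x (given by coefficients) is zero in V_2, i.e. lies in the span of the
   relations rel2 r a with a.1 >= r. *)
Definition zero_in_V2 (r : nat) (x : nat * nat -> Qq) : Prop :=
  exists s : seq (Qq * (nat * nat)),
    all (fun p => (r <= p.2.1)%N) s /\
    forall b, x b = \sum_(p <- s) p.1 * rel2 r p.2 b.

From HB Require Import structures.
From mathcomp Require Import all_boot all_order all_algebra.
From mathcomp Require Import ring zify.
Import Order.TTheory GRing.Theory Num.Theory.
Local Open Scope ring_scope.

(* For k = 0 the identity is the defining relation at (r, l).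
   The map (a1, a2) |-> (a1 + 1, a2) sends relations to relations, so shifting
   the identity for k and rewriting its term (r, l + k + 1) by the relation at
   (r, l + k + 1) yields an identity of the same shape for k + 1.  The
   coefficients agree by a three-term recurrence for q-binomials, which reduces
   to [s][s + t + u] + [u][t] = [s + t][s + u]. *)

Lemma subV_mul_identity (F : fieldType) (x y z : F) :
  x != 0 -> y != 0 -> z != 0 ->
  (x - x^-1) * (x * y * z - (x * y * z)^-1) + (z - z^-1) * (y - y^-1)
  = (x * y - (x * y)^-1) * (x * z - (x * z)^-1).
Proof. by move=> x0 y0 z0; rewrite !invfM; field; rewrite x0 y0 z0. Qed.

Section FactorialAnalogue.

Context {F : fieldType} (g : nat -> F).
Hypothesis gS_neq0 : forall n, g n.+1 != 0.
Hypothesis g_identity : forall s t u,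
  g s * g (s + t + u) + g u * g t = g (s + t) * g (s + u).

Definition gfact n := \prod_(i < n) g i.+1.

Definition gbinom m p := gfact (m + p) / (gfact m * gfact p).

Lemma gfactS n : gfact n.+1 = gfact n * g n.+1.
Proof. by rewrite /gfact big_ord_recr. Qed.

Lemma gfact_neq0 n : gfact n != 0.
Proof. exact/prodf_neq0. Qed.

Lemma gbinom_three_term a b k :
  gbinom a k.+1 * gbinom b.+1 (a + k).+2
  = - (gbinom a.+1 k * gbinom b (a + k).+2)
    + gbinom (a + b).+1 k.+1 * gbinom a.+1 b.+1.
Proof.
rewrite /gbinom !(addSn, addnS) [(b + _)%N]addnCA addnA !gfactS.
have := g_identity a.+1 b.+1 k.+1; rewrite !(addSn, addnS) => g_id.
have -> : g (a + b + k).+3 = (g (a + b).+2 * g (a + k).+2 - g k.+1 * g b.+1) / g a.+1.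
  by rewrite -g_id addrK mulrC mulKf.
by field; rewrite ?gfact_neq0 ?gS_neq0.
Qed.

End FactorialAnalogue.

Lemma q_neq0 : q != 0.
Proof. by rewrite tofrac_eq0 polyX_eq0. Qed.

Lemma expq_neq1 n : (0 < n)%N -> q ^+ n != 1.
Proof.
move=> n_gt0; rewrite /q -tofracXn -tofrac1 tofrac_eq.
apply: contraTneq n_gt0 => /(congr1 (fun p : {poly rat} => size p)).
by rewrite size_polyXn size_poly1 => -[->].
Qed.

Lemma expq_subV_neq0 n : (0 < n)%N -> q ^+ n - (q ^+ n)^-1 != 0.
Proof.
move=> n_gt0; rewrite subr_eq0.
apply: contra_neq (expq_neq1 _ (ltn_addr n n_gt0)) => qnV.
by rewrite exprD {1}qnV mulVf // expf_neq0 // q_neq0.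
Qed.

Lemma qintE (n : nat) : qint n%:Z = (q ^+ n - (q ^+ n)^-1) / (q - q^-1).
Proof. by rewrite /qint -exprnN exprnP. Qed.

Lemma qintS_neq0 n : qint n.+1%:Z != 0.
Proof. by rewrite qintE mulf_neq0 ?invr_eq0 ?expq_subV_neq0 // (@expq_subV_neq0 1). Qed.

Lemma qint_identity (s t u : nat) :
  qint s%:Z * qint (s + t + u)%N%:Z + qint u%:Z * qint t%:Z
  = qint (s + t)%N%:Z * qint (s + u)%N%:Z.
Proof.
have qX_neq0 n : q ^+ n != 0 by rewrite expf_neq0 // q_neq0.
rewrite !qintE !exprD; set d := (q - q^-1)^-1.
by rewrite !(mulrACA _ d _ d) -mulrDl subV_mul_identity.
Qed.

Notation qfact := (gfact (fun n => qint n%:Z)).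

Lemma qfact_neq0 n : qfact n != 0.
Proof. exact: gfact_neq0 qintS_neq0 n. Qed.

Lemma qfalling_mul_qfact n m : (m <= n)%N ->
  (\prod_(i < m) qint (n%:Z - i%:Z)) * qfact (n - m) = qfact n.
Proof.
elim: m => [|m IHm] le_mn; first by rewrite big_ord0 mul1r subn0.
rewrite big_ord_recr /= -(IHm (ltnW le_mn)) subzn ?(ltnW le_mn) //.
by rewrite -(subnSK le_mn) gfactS -mulrA [qint _ * _]mulrC.
Qed.

Lemma qbinom_gbinom m p n : (m + p)%N = n ->
  qbinom n%:Z m = gbinom (fun n => qint n%:Z) m p.
Proof.
move=> <-; rewrite /gbinom -[in RHS](@qfalling_mul_qfact (m + p) m) ?leq_addr // addKn.
by rewrite [qfact m * _]mulrC invfM mulrA mulfK ?qfact_neq0.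
Qed.

Lemma qbinom0 n : qbinom n 0 = 1.
Proof. by rewrite /qbinom !big_ord0 divr1. Qed.

Lemma qbinomnn n : qbinom n%:Z n = 1.
Proof.
rewrite (@qbinom_gbinom n 0) ?addn0 // /gbinom addn0 [gfact _ 0]big_ord0 mulr1.
by rewrite divff ?qfact_neq0.
Qed.

Lemma qbinom_sub n m : (m <= n)%N -> qbinom n%:Z (n - m) = qbinom n%:Z m.
Proof.
move=> le_mn; rewrite (@qbinom_gbinom (n - m) m) ?subnK //.
rewrite (@qbinom_gbinom m (n - m)) ?subnKC //.
by rewrite /gbinom addnC [qfact m * _]mulrC.
Qed.

Lemma qbinom_three_term a b k :
  qbinom (a + k).+1%:Z a * qbinom (a + b + k).+3%:Z b.+1
  = - (qbinom (a + k).+1%:Z a.+1 * qbinom (a + b + k).+2%:Z b)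
    + qbinom (a + b + k).+2%:Z (a + b).+1 * qbinom (a + b).+2%:Z a.+1.
Proof.
rewrite (@qbinom_gbinom a k.+1) 1?(@qbinom_gbinom b.+1 (a + k).+2)
  1?(@qbinom_gbinom a.+1 k) 1?(@qbinom_gbinom b (a + k).+2)
  1?(@qbinom_gbinom (a + b).+1 k.+1) 1?(@qbinom_gbinom a.+1 b.+1); try lia.
exact: gbinom_three_term qintS_neq0 qint_identity a b k.
Qed.

Lemma basis2S0 a1 a2 b2 : basis2 (a1.+1, a2) (0, b2)%N = 0.
Proof. by rewrite /basis2 xpair_eqE. Qed.

Lemma basis2SS a1 a2 b1 b2 : basis2 (a1.+1, a2) (b1.+1, b2) = basis2 (a1, a2) (b1, b2).
Proof. by rewrite /basis2 !xpair_eqE eqSS. Qed.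

(* Coefficients of the image of x under the linear map (a1, a2) |-> (a1 + 1, a2). *)
Definition shift1 (x : nat * nat -> Qq) (b : nat * nat) : Qq :=
  if b.1 is n.+1 then x (n, b.2) else 0.

Section RelationSpan.

Context {r : nat}.

Lemma zero_in_V2_ext (x y : nat * nat -> Qq) :
  zero_in_V2 r x -> x =1 y -> zero_in_V2 r y.
Proof. by move=> [s [s_ok xE]] eq_xy; exists s; split=> // b; rewrite -eq_xy. Qed.

Lemma zero_in_V2D {x y : nat * nat -> Qq} :
  zero_in_V2 r x -> zero_in_V2 r y -> zero_in_V2 r (fun b => x b + y b).
Proof.
move=> [s [s_ok xE]] [t [t_ok yE]]; exists (s ++ t).
by rewrite all_cat s_ok t_ok; split=> // b; rewrite big_cat xE yE.
Qed.

Lemma zero_in_V2Z c {x : nat * nat -> Qq} :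
  zero_in_V2 r x -> zero_in_V2 r (fun b => c * x b).
Proof.
move=> [s [s_ok xE]]; exists [seq (c * p.1, p.2) | p <- s].
rewrite all_map; split=> // b.
by rewrite big_map xE mulr_sumr; apply: eq_bigr => p _; rewrite mulrA.
Qed.

Lemma zero_in_V2_rel2 a : (r <= a.1)%N -> zero_in_V2 r (rel2 r a).
Proof.
by move=> le_ra; exists [:: (1, a)]; rewrite /= le_ra; split=> // b; rewrite big_seq1 mul1r.
Qed.

Lemma shift1_rel2 a b : (r <= a.1)%N -> shift1 (rel2 r a) b = rel2 r (a.1.+1, a.2) b.
Proof.
move=> le_ra; have le_ja (j : 'I_r.+1) : (j <= a.1)%N.
  by rewrite (leq_trans _ le_ra) // -ltnS.
case: b => [[|b1] b2]; rewrite /shift1 /rel2 /=.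
  by rewrite big1 // => j _; rewrite subSn ?basis2S0 ?mulr0.
by apply: eq_bigr => j _; rewrite subSn ?basis2SS.
Qed.

Lemma zero_in_V2_shift1 {x} : zero_in_V2 r x -> zero_in_V2 r (shift1 x).
Proof.
move=> [s [s_ok xE]]; exists [seq (p.1, (p.2.1.+1, p.2.2)) | p <- s]; split.
  by rewrite all_map; apply: sub_all s_ok => p /= /leqW.
move=> b; rewrite big_map.
have -> : shift1 x b = \sum_(p <- s) p.1 * shift1 (rel2 r p.2) b.
  case: b => [[|b1] b2]; rewrite /shift1 //=.
  by rewrite big1 // => p _; rewrite mulr0.
by rewrite !big_seq; apply: eq_bigr => p /(allP s_ok) le_rp; rewrite shift1_rel2.
Qed.

End RelationSpan.

Lemma rel2E r a b : rel2 r a b =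
  \sum_(0 <= j < r.+1) (-1) ^+ j * qbinom r%:Z j * basis2 (a.1 - j, a.2 + j)%N b.
Proof. by rewrite big_mkord. Qed.

Definition ecoef (r k s : nat) : Qq :=
  (-1) ^+ (s - 1) * qbinom (s + k - 1)%N%:Z (s - 1) * qbinom (r + k)%N%:Z (r - s).

Definition expansion (r k l : nat) (b : nat * nat) : Qq :=
  basis2 (r + k, l)%N b - \sum_(1 <= s < r.+1) ecoef r k s * basis2 (r - s, l + s + k)%N b.

Lemma expansionE r k l b : expansion r k l b =
  basis2 (r + k, l)%N b
  - \sum_(0 <= i < r) ecoef r k i.+1 * basis2 (r - i.+1, l + i.+1 + k)%N b.
Proof. by rewrite /expansion big_add1. Qed.

Lemma expansion0 r l b : expansion r 0 l b = rel2 r (r, l) b.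
Proof.
rewrite expansionE rel2E big_nat_recl // expr0 qbinom0 !mul1r subn0 !addn0.
rewrite -sumrN; congr (_ + _); apply: eq_big_nat => i /andP[_ lt_ir].
rewrite /ecoef !addn0 subn1 /= qbinomnn qbinom_sub // exprS.
by rewrite mulr1 !mulN1r !mulNr.
Qed.

Lemma ecoefS m k i : (i < m)%N ->
  ecoef m.+1 k.+1 i.+1
  = ecoef m.+1 k i.+2 - ecoef m.+1 k 1 * ((-1) ^+ i.+1 * qbinom m.+1%:Z i.+1).
Proof.
move=> /subnKC <-; move: (m - i.+1)%N => b.
rewrite /ecoef !(addSn, addnS, add0n) !subSS !subn0 subSn ?leq_addr // !addKn.
rewrite -mulrA qbinom_three_term expr0 qbinom0 exprS.
ring.
Qed.

Lemma ecoefS_last m k :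
  ecoef m.+1 k.+1 m.+1 = - (ecoef m.+1 k 1 * ((-1) ^+ m.+1 * qbinom m.+1%:Z m.+1)).
Proof.
rewrite /ecoef !(addSn, addnS, add0n) !subSS !subn0 subnn !qbinomnn !qbinom0 expr0 exprS.
ring.
Qed.

Lemma shift1_expansion r k l b : shift1 (expansion r k l) b =
  basis2 (r + k.+1, l)%N b
  - \sum_(0 <= i < r) ecoef r k i.+1 * basis2 ((r - i.+1).+1, l + i.+1 + k)%N b.
Proof.
case: b => [[|b1] b2]; rewrite /shift1 /= addnS.
  by rewrite basis2S0 big1 ?subr0 // => i _; rewrite basis2S0 mulr0.
by rewrite basis2SS expansionE; congr (_ - _); apply: eq_bigr => i _; rewrite basis2SS.
Qed.

Lemma expansionS m k l b :
  expansion m.+1 k.+1 l b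
  = shift1 (expansion m.+1 k l) b + ecoef m.+1 k 1 * rel2 m.+1 (m.+1, (l + k).+1) b.
Proof.
rewrite shift1_expansion expansionE rel2E.
rewrite big_nat_recr // big_nat_recl // big_nat_recl // big_nat_recr //=.
have -> : \sum_(0 <= i < m) ecoef m.+1 k.+1 i.+1 * basis2 (m.+1 - i.+1, l + i.+1 + k.+1)%N b
  = \sum_(0 <= i < m) ecoef m.+1 k i.+2 * basis2 ((m.+1 - i.+2).+1, l + i.+2 + k)%N b
    - ecoef m.+1 k 1 * \sum_(0 <= i < m) (-1) ^+ i.+1 * qbinom m.+1%:Z i.+1
                                  * basis2 (m.+1 - i.+1, (l + k).+1 + i.+1)%N b.
  rewrite mulr_sumr -sumrB; apply: eq_big_nat => i /andP[_ lt_im].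
  have -> : ((m.+1 - i.+2).+1 = m.+1 - i.+1)%N by lia.
  have -> : (l + i.+2 + k = l + i.+1 + k.+1)%N by lia.
  have -> : ((l + k).+1 + i.+1 = l + i.+1 + k.+1)%N by lia.
  by rewrite ecoefS // mulrBl !mulrA.
have -> : ((m.+1 - 1).+1 = m.+1 - 0)%N by lia.
have -> : (l + 1 + k = (l + k).+1 + 0)%N by lia.
have -> : ((l + k).+1 + m.+1 = l + m.+1 + k.+1)%N by lia.
rewrite ecoefS_last expr0 qbinom0 !mul1r.
ring.
Qed.

Lemma zero_in_V2_expansion m k l : zero_in_V2 m.+1 (expansion m.+1 k l).
Proof.
elim: k l => [|k IHk] l.
  have := zero_in_V2_rel2 (m.+1, l) (leqnn _).
  by move/zero_in_V2_ext; apply=> b; rewrite expansion0.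
have := zero_in_V2D (zero_in_V2_shift1 (IHk l))
  (zero_in_V2Z (ecoef m.+1 k 1) (zero_in_V2_rel2 (m.+1, (l + k).+1) (leqnn _))).
by move/zero_in_V2_ext; apply=> b; rewrite expansionS.
Qed.

Theorem proposition5p4 (r : nat) (hr : (2 <= r)%N) (k l : nat) :
  zero_in_V2 r (fun b =>
    basis2 (r + k, l)%N b -
    \sum_(1 <= s < r.+1)
      (-1) ^+ (s - 1) * qbinom (s + k - 1)%N%:Z (s - 1)
        * qbinom (r + k)%N%:Z (r - s) * basis2 (r - s, l + s + k)%N b).
Proof. by case: r hr => [|m] // _; apply: zero_in_V2_expansion. Qed.
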